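(* Let $\Phi$ be a stable central pair potential with stability constant $B\ge0$, $\beta>0$, $u:=e^{2\beta B}$, and let $R$ be a partition scheme for $\mathcal C[n+1]$. For every tree $\tau\in\mathcal T[n+1]$ and every configuration $(x_1,\dots,x_{n+1})\in(\mathbb R^d)^{n+1}$ there exists a permutation $\Pi$ of $[n+1]$ such that $$\prod_{\{i,j\}\in E(R(\tau))\setminus E(\tau)}\big(1+f_{\Pi(i),\Pi(j)}\big)\le u^{n-1}.$$
   Context: $f_{i,j}:=e^{-\beta\Phi(x_i,x_j)}-1$, so $1+f_{i,j}=e^{-\beta\Phi(x_i,x_j)}$. Stability: $\sum_{1\le i<j\le N}\Phi(x_i,x_j)\ge -BN$ for all $N$ and all configurations. $\mathcal C[N]$ and $\mathcal T[N]$ denote the connected graphs and the trees on $[N]=\{1,\dots,N\}$, partially ordered by edge inclusion; for $G\le H$, $[G,H]=\{K: G\le K\le H\}$. A partition scheme is a map $R:\mathcal T[N]\to\mathcal C[N]$ with $E(R(\tau))\supseteq E(\tau)$ for all $\tau$, such that $\mathcal C[N]$ is the disjoint union of the intervals $[\tau,R(\tau)]$, $\tau\in\mathcal T[N]$. *)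

From Stdlib Require Import Reals.
From mathcomp Require Import all_boot all_fingroup.

Set Implicit Arguments.
Unset Strict Implicit.
Unset Printing Implicit Defensive.

Definition point (d : nat) := 'I_d -> R.

Definition eucl_dist (d : nat) (x y : point d) : R :=
  sqrt (\big[Rplus/R0]_(k < d) (Rmult (Rminus (x k) (y k)) (Rminus (x k) (y k)))).

(* A pair potential with values in R ∪ {+∞}; [None] encodes +∞. *)
Definition potential (d : nat) := point d -> point d -> option R.

Definition central (d : nat) (Phi : potential d) : Prop :=
  exists phi : R -> option R, forall x y, Phi x y = phi (eucl_dist x y).

Definition ext_add (a b : option R) : option R :=
  match a, b with Some s, Some t => Some (Rplus s t) | _, _ => None end.

Definition pair_energy (d N : nat) (Phi : potential d) (x : 'I_N -> point d)
  : option R :=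
  \big[ext_add/Some R0]_(i < N) \big[ext_add/Some R0]_(j < N | (i < j)%N)
     Phi (x i) (x j).

Definition stable (d : nat) (Phi : potential d) (B : R) : Prop :=
  forall (N : nat) (x : 'I_N -> point d),
    match pair_energy Phi x with
    | None => True
    | Some s => Rge s (Ropp (Rmult B (INR N)))
    end.

(* Boltzmann factor e^{-βΦ} = 1 + f, with e^{-β(+∞)} = 0. *)
Definition boltz (beta : R) (p : option R) : R :=
  match p with None => R0 | Some v => exp (Ropp (Rmult beta v)) end.

(* Graphs on the vertex set 'I_N (= [N], 0-indexed), as sets of edges;
   an edge is a 2-element subset of vertices. *)
Definition is_graph (N : nat) (G : {set {set 'I_N}}) : bool :=
  [forall e in G, #|e| == 2].

Definition adj (N : nat) (G : {set {set 'I_N}}) : rel 'I_N :=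
  fun u v => [set u; v] \in G.

Definition connected_graph (N : nat) (G : {set {set 'I_N}}) : Prop :=
  is_graph G /\ forall u v : 'I_N, connect (adj G) u v.

Definition is_tree (N : nat) (G : {set {set 'I_N}}) : Prop :=
  connected_graph G /\ #|G| = N.-1.

(* Partition scheme: R maps trees to connected graphs containing them, and
   C[N] is the disjoint union of the intervals [τ, R τ]. *)
Definition partition_scheme (N : nat)
  (Rs : {set {set 'I_N}} -> {set {set 'I_N}}) : Prop :=
  (forall t, is_tree t -> connected_graph (Rs t) /\ t \subset Rs t) /\
  (forall G, connected_graph G ->
     exists t, [/\ is_tree t, t \subset G, G \subset Rs t &
       forall t', is_tree t' -> t' \subset G -> G \subset Rs t' -> t' = t]).

(* Average over the symmetric group.  Every ordered pair of distinct points
   of [[N]] is carried onto every other one by the same number of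
   permutations, so for a symmetric weight [w] and a set [A] of such pairs,
   [sum_P sum_(ij in A) w (P i) (P j)] is [|perm| |A| / (N (N - 1))] times the
   off-diagonal sum of [w], i.e. times twice the interaction energy.  With
   [w] the potential of the configuration, stability bounds that energy below
   by [-B N]; since [A] (the pairs of [R t \ t]) misses the edges of the tree,
   [|A| <= n (n - 1)] for [N = n + 1], so some permutation gives
   [sum_(ij in A) w (P i) (P j) >= -2 B (n - 1)], which is the claimed bound
   on the product of Boltzmann factors.  If some interaction is infinite, a
   permutation sending it onto a pair of [A] makes the product vanish. *)

From HB Require Import structures.
From Stdlib Require Import Reals Lra Classical.
From mathcomp Require Import all_boot all_fingroup zify.

Set Implicit Arguments.
Unset Strict Implicit.
Unset Printing Implicit Defensive.

Open Scope R_scope.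

Lemma Rplus_assoc' : associative Rplus.
Proof. by move=> a b c; rewrite Rplus_assoc. Qed.

Lemma Rmult_assoc' : associative Rmult.
Proof. by move=> a b c; rewrite Rmult_assoc. Qed.

HB.instance Definition _ :=
  Monoid.isComLaw.Build R R0 Rplus Rplus_assoc' Rplus_comm Rplus_0_l.
HB.instance Definition _ :=
  Monoid.isComLaw.Build R R1 Rmult Rmult_assoc' Rmult_comm Rmult_1_l.

Section RealBigops.

Variables (I : finType) (P : pred I).

Lemma big_Rplus_distrl (c : R) (F : I -> R) :
  c * \big[Rplus/R0]_(i | P i) F i = \big[Rplus/R0]_(i | P i) (c * F i).
Proof.
apply: (big_morph (fun s => c * s)); last exact: Rmult_0_r.
by move=> a b; rewrite Rmult_plus_distr_l.
Qed.

Lemma big_Rmult_exp (F : I -> R) :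
  \big[Rmult/R1]_(i | P i) exp (F i) = exp (\big[Rplus/R0]_(i | P i) F i).
Proof. by symmetry; apply: (big_morph exp); [exact: exp_plus | exact: exp_0]. Qed.

Lemma big_Rplus_le (F G : I -> R) :
  (forall i, P i -> F i <= G i) ->
  \big[Rplus/R0]_(i | P i) F i <= \big[Rplus/R0]_(i | P i) G i.
Proof.
move=> FG; apply: (big_ind2 Rle) => //; first exact: Rle_refl.
by move=> a b c e; apply: Rplus_le_compat.
Qed.

Lemma big_Rplus_const (c : R) :
  \big[Rplus/R0]_(i | P i) c = INR #|P| * c.
Proof.
rewrite -[LHS]/(\big[Rplus/R0]_(i in P) c) big_const.
by elim: #|P| => [|k IH]; rewrite ?S_INR /= ?IH; ring.
Qed.

End RealBigops.

Lemma exists_ge_average (I : finType) (i0 : I) (F : I -> R) (c : R) :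
  INR #|I| * c <= \big[Rplus/R0]_i F i -> exists i, c <= F i.
Proof.
move=> avg; apply: NNPP => none.
have lt_c i : F i < c by apply: Rnot_le_lt => ci; apply: none; exists i.
have sum_c : \big[Rplus/R0]_(i : I) c = INR #|I| * c := big_Rplus_const predT c.
apply: (Rlt_not_le _ _ _ avg); rewrite -sum_c.
rewrite (bigD1 i0) //= [X in _ < X](bigD1 i0) //=.
apply: Rplus_lt_le_compat => //.
by apply: big_Rplus_le => i _; apply: Rlt_le.
Qed.

Lemma exists_perm_pair (T : finType) (k l i j : T) :
  k != l -> i != j -> exists s : {perm T}, s k = i /\ s l = j.
Proof.
move=> kl ij; pose s1 := tperm k i.
have s1k : s1 k = i by rewrite tpermL.
have s1l : s1 l != i by rewrite -s1k (inj_eq perm_inj) eq_sym.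
exists (s1 * tperm (s1 l) j)%g; rewrite !permM s1k tpermL.
by rewrite tpermD // eq_sym.
Qed.

Section PermAverage.

Variables (T : finType) (w : T -> T -> R).

Definition offdiag : pred (T * T) := [pred ij | ij.1 != ij.2].

Let wP (P : {perm T}) (ij : T * T) := w (P ij.1) (P ij.2).

Lemma card_offdiag : #|offdiag| = (#|T| * #|T|.-1)%N.
Proof.
rewrite -sum1_card (eq_bigl (fun ij => predT ij.1 && (ij.1 != ij.2))) //.
rewrite -(pair_big_dep predT (fun i j => i != j) (fun _ _ => 1%N)) /=.
rewrite (eq_bigr (fun _ => #|T|.-1)) ?sum_nat_const // => i _.
by rewrite sum1_card -(cardC1 i); apply: eq_card => j; rewrite !inE eq_sym.
Qed.

Lemma sum_perm_offdiag_pair (i j k l : T) : i != j -> k != l ->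
  \big[Rplus/R0]_P wP P (i, j) = \big[Rplus/R0]_P wP P (k, l).
Proof.
move=> ij kl; have [s [<- <-]] := exists_perm_pair ij kl.
rewrite [LHS](reindex_inj (mulgI s)); apply: eq_bigr => P _.
by rewrite /wP !permM.
Qed.

Lemma sum_perm_offdiag :
  \big[Rplus/R0]_P \big[Rplus/R0]_(ij | offdiag ij) wP P ij =
  INR #|{perm T}| * \big[Rplus/R0]_(ij | offdiag ij) w ij.1 ij.2.
Proof.
have sum_c (c : R) : \big[Rplus/R0]_(P : {perm T}) c = INR #|{perm T}| * c.
  exact: big_Rplus_const predT c.
rewrite -sum_c; apply: eq_bigr => P _.
rewrite [RHS](reindex_inj (h := fun ij => (P ij.1, P ij.2))) /=; last first.
  by move=> [a1 a2] [b1 b2] [/perm_inj -> /perm_inj ->].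
by apply: eq_bigl => ij; rewrite /offdiag /= (inj_eq perm_inj).
Qed.

Lemma card_offdiag_sum_perm (A : pred (T * T)) :
  {subset A <= offdiag} ->
  INR #|offdiag| * \big[Rplus/R0]_P \big[Rplus/R0]_(ij | A ij) wP P ij =
  INR #|A| * (INR #|{perm T}| * \big[Rplus/R0]_(ij | offdiag ij) w ij.1 ij.2).
Proof.
move=> sub_A; case: (pickP offdiag) => [[i0 j0] ij0 | no_pair]; last first.
  have A0 : #|A| = 0%N.
    by apply: eq_card0 => ij; apply/negbTE/negP => /sub_A; apply/negP/negbT/no_pair.
  by rewrite A0 (eq_card0 no_pair) /=; ring.
pose s := \big[Rplus/R0]_P wP P (i0, j0).
have sum_pairs (D : pred (T * T)) : {subset D <= offdiag} ->
    \big[Rplus/R0]_P \big[Rplus/R0]_(ij | D ij) wP P ij = INR #|D| * s.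
  move=> sub_D; rewrite exchange_big -big_Rplus_const.
  by apply: eq_bigr => -[i j] /sub_D ij; apply: sum_perm_offdiag_pair.
by rewrite -sum_perm_offdiag !sum_pairs //; ring.
Qed.

End PermAverage.

Arguments offdiag {T}.

Lemma exp_nondecreasing (a b : R) : a <= b -> exp a <= exp b.
Proof. by case=> [/exp_increasing/Rlt_le | ->] //; exact: Rle_refl. Qed.

Lemma exp_pow_INR (a : R) (k : nat) : exp a ^ k = exp (INR k * a).
Proof.
elim: k => [|k IH]; first by rewrite Rmult_0_l exp_0.
by rewrite S_INR /= IH -exp_plus; congr exp; ring.
Qed.

Lemma big_boltz_Some (I : finType) (P : pred I) (beta : R) (F : I -> R) :
  \big[Rmult/R1]_(i | P i) boltz beta (Some (F i)) =
  exp (- (beta * \big[Rplus/R0]_(i | P i) F i)).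
Proof.
rewrite Ropp_mult_distr_l big_Rplus_distrl -big_Rmult_exp.
by apply: eq_bigr => i _; rewrite /boltz Ropp_mult_distr_l.
Qed.

Section OrdinalPairs.

Variable N : nat.

Definition ltpair : pred ('I_N * 'I_N) := [pred ij : 'I_N * 'I_N | (ij.1 < ij.2)%N].

Lemma ltpair_offdiag : {subset ltpair <= offdiag}.
Proof. by move=> [i j]; rewrite !unfold_in /= -(inj_eq val_inj) /= neq_ltn => ->. Qed.

Lemma card_ltpair : (2 * #|ltpair|)%N = (N * N.-1)%N.
Proof.
have card_gtpair : #|[pred ij : 'I_N * 'I_N | (ij.2 < ij.1)%N]| = #|ltpair|.
  rewrite -!sum1_card (reindex_inj (h := fun ij => (ij.2, ij.1))) //.
  by move=> [a1 a2] [b1 b2] [-> ->].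
rewrite -[N in RHS]card_ord -card_offdiag mul2n -addnn -(cardID ltpair offdiag).
congr (_ + _)%N; last rewrite -card_gtpair; apply: eq_card => -[i j];
  by rewrite !unfold_in /= -(inj_eq val_inj) /=; case: ltngtP.
Qed.

Lemma sum_offdiag_sym (w : 'I_N -> 'I_N -> R) : (forall i j, w i j = w j i) ->
  \big[Rplus/R0]_(ij | offdiag ij) w ij.1 ij.2 =
  2 * \big[Rplus/R0]_(i < N) \big[Rplus/R0]_(j < N | (i < j)%N) w i j.
Proof.
move=> w_sym.
rewrite (eq_bigl (fun ij => predT ij.1 && (ij.1 != ij.2))) //.
rewrite -(pair_big_dep predT (fun i j => i != j) w) /=.
have split_neq (i : 'I_N) : \big[Rplus/R0]_(j | i != j) w i j =
    \big[Rplus/R0]_(j < N | (i < j)%N) w i j +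
    \big[Rplus/R0]_(j < N | (j < i)%N) w j i.
  rewrite big_mkcond [in RHS]big_mkcond [X in _ + X]big_mkcond -big_split.
  apply: eq_bigr => j _; rewrite -(inj_eq val_inj) /= neq_ltn w_sym.
  by case: ltngtP => _ /=; ring.
rewrite (eq_bigr _ (fun i _ => split_neq i)) big_split /=.
by rewrite (exchange_big_dep predT) //= Rplus_diag.
Qed.

End OrdinalPairs.

Arguments ltpair : clear implicits.

Lemma card_proper_ltpair (n : nat) (A : pred ('I_n.+1 * 'I_n.+1)) :
  A \proper ltpair n.+1 -> (1 <= n)%N /\ (#|A| <= n * (n - 1))%N.
Proof.
(* [2 (|A| + 1) <= (n + 1) n] and [(n - 1) (n - 2) >= 0] *)
by move=> /proper_card; have := card_ltpair n.+1; rewrite /=; split; nia.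
Qed.

Lemma exists_perm_sum_ge (n : nat) (w : 'I_n.+1 -> 'I_n.+1 -> R)
    (A : pred ('I_n.+1 * 'I_n.+1)) (B : R) :
  0 <= B -> (forall i j, w i j = w j i) ->
  - (B * INR n.+1) <=
    \big[Rplus/R0]_(i < n.+1) \big[Rplus/R0]_(j < n.+1 | (i < j)%N) w i j ->
  A \proper ltpair n.+1 ->
  exists P : {perm 'I_n.+1},
    - (2 * B * INR (n - 1)) <= \big[Rplus/R0]_(ij | A ij) w (P ij.1) (P ij.2).
Proof.
move=> B_ge0 w_sym energy_ge A_lt.
have A_offdiag : {subset A <= offdiag}.
  by move=> ij /(subsetP (proper_sub A_lt)) /ltpair_offdiag.
have [n_ge1 card_A] := card_proper_ltpair A_lt.
have averaged := card_offdiag_sum_perm w A_offdiag.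
rewrite sum_offdiag_sym // card_offdiag card_ord mult_INR S_INR /= in averaged.
rewrite S_INR in energy_ge.
have {}card_A : INR #|A| <= INR n * (INR n - 1).
  by rewrite -[1]/(INR 1) -minus_INR -?mult_INR; [apply/le_INR/leP | apply/leP].
apply: (exists_ge_average 1%g); rewrite minus_INR /=; last exact/leP.
move: averaged energy_ge card_A.
set S := \big[Rplus/R0]_P _; set E := \big[Rplus/R0]_(i < n.+1) _.
set a := INR #|A|; set K := INR #|_|; set m := INR n => averaged energy_ge card_A.
have m_ge1 : 1 <= m by apply: (le_INR 1); apply/leP.
have K_ge0 : 0 <= K := pos_INR _.
have a_ge0 : 0 <= a := pos_INR _.
have aE_ge : 0 <= a * (2 * E) + 2 * B * (m + 1) * (m * (m - 1)).
  have : 0 <= a * (E + B * (m + 1)) by apply: Rmult_le_pos; lra.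
  have : 0 <= (m * (m - 1) - a) * (B * (m + 1)) by apply: Rmult_le_pos; nra.
  nra.
apply: (Rmult_le_reg_l ((m + 1) * m)); first nra.
rewrite averaged.
have : 0 <= K * (a * (2 * E) + 2 * B * (m + 1) * (m * (m - 1))) by apply: Rmult_le_pos.
nra.
Qed.

Lemma central_sym (d : nat) (Phi : potential d) :
  central Phi -> forall y z, Phi y z = Phi z y.
Proof.
case=> phi Phi_phi y z; rewrite !Phi_phi; congr phi.
by rewrite /eucl_dist; congr sqrt; apply: eq_bigr => k _; ring.
Qed.

Lemma pair_energy_Some (d N : nat) (Phi : potential d) (x : 'I_N -> point d)
    (w : 'I_N -> 'I_N -> R) :
  (forall i j, i != j -> Phi (x i) (x j) = Some (w i j)) ->
  pair_energy Phi x =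
    Some (\big[Rplus/R0]_(i < N) \big[Rplus/R0]_(j < N | (i < j)%N) w i j).
Proof.
move=> Phi_w; rewrite /pair_energy (big_morph Some (id1 := Some R0) (op1 := ext_add)) //.
apply: eq_bigr => i _; rewrite (big_morph Some (id1 := Some R0) (op1 := ext_add)) //.
by apply: eq_bigr => j ij; apply: Phi_w; exact: (@ltpair_offdiag N (i, j) ij).
Qed.

Lemma setD_tree_proper_ltpair (N : nat) (t S : {set {set 'I_N}}) :
  is_tree t -> (1 < N)%N ->
  [pred ij | ltpair N ij && ([set ij.1; ij.2] \in S :\: t)] \proper ltpair N.
Proof.
move=> [[t_graph _] card_t] N_gt1; apply/properP; split.
  by apply/subsetP => ij /andP [].
have /card_gt0P [e e_t] : (0 < #|t|)%N.
  by rewrite card_t; case: N N_gt1 {t S t_graph card_t} => [|[]].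
have /cards2P [u [v [uv e_uv]]] : #|e| == 2%N.
  by move/forallP/(_ e): t_graph; rewrite e_t.
rewrite {}e_uv in e_t; case: (ltngtP u v) => [uv_lt | vu_lt | uv_eq].
- by exists (u, v); rewrite // unfold_in /= in_setD e_t andbF.
- by exists (v, u); rewrite // unfold_in /= in_setD setUC e_t andbF.
- by move: uv; rewrite -(inj_eq val_inj) /= uv_eq eqxx.
Qed.

Theorem lemma6p6 (d : nat) (Phi : potential d) (B beta : R) (n : nat)
  (Rs : {set {set 'I_n.+1}} -> {set {set 'I_n.+1}}) :
  central Phi -> stable Phi B -> Rle R0 B -> Rlt R0 beta ->
  partition_scheme Rs ->
  forall (t : {set {set 'I_n.+1}}) (x : 'I_n.+1 -> point d),
    is_tree t ->
    exists Pi : {perm 'I_n.+1},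
      Rle (\big[Rmult/R1]_(i < n.+1)
         \big[Rmult/R1]_(j < n.+1 | (i < j)%N && ([set i; j] \in Rs t :\: t))
            boltz beta (Phi (x (Pi i)) (x (Pi j))))
       (pow (exp (Rmult (Rmult (INR 2) beta) B)) (n - 1)).
Proof.
move=> Phi_central Phi_stable B_ge0 beta_gt0 _ t x t_tree.
rewrite (_ : INR 2 = 2); last by rewrite /=; ring.
pose A := [pred ij | ltpair n.+1 ij && ([set ij.1; ij.2] \in Rs t :\: t)].
suff [P prod_le] : exists P : {perm 'I_n.+1},
    \big[Rmult/R1]_(ij | A ij) boltz beta (Phi (x (P ij.1)) (x (P ij.2))) <=
    exp (2 * beta * B) ^ (n - 1).
  by exists P; rewrite pair_big_dep.
have bound_ge1 : 1 <= exp (2 * beta * B) ^ (n - 1).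
  by apply: pow_R1_Rle; rewrite -exp_0; apply: exp_nondecreasing; nra.
case: (pickP A) => [[i0 j0] /andP [ij0_lt ij0_A] | A0]; last first.
  by exists 1%g; rewrite big_pred0.
case: (pickP [pred uv | (uv.1 != uv.2) && ~~ isSome (Phi (x uv.1) (x uv.2))]).
  move=> [u v] /andP [/= uv Phi_uv].
  have [P [Pi0 Pj0]] := exists_perm_pair (@ltpair_offdiag _ (i0, j0) ij0_lt) uv.
  exists P; rewrite (bigD1 (i0, j0)) /=; last exact/andP.
  by rewrite Pi0 Pj0; case: (Phi _ _) Phi_uv => // _; rewrite Rmult_0_l; lra.
move=> Phi_finite; pose w u v := if Phi (x u) (x v) is Some r then r else R0.
have Phi_w u v : u != v -> Phi (x u) (x v) = Some (w u v).
  by move=> uv; move: (Phi_finite (u, v)); rewrite /= uv /w; case: (Phi _ _).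
have w_sym u v : w u v = w v u by rewrite /w (central_sym Phi_central).
have energy_ge := Phi_stable n.+1 x; rewrite (pair_energy_Some Phi_w) in energy_ge.
have A_lt : A \proper ltpair n.+1.
  apply: setD_tree_proper_ltpair t_tree _.
  by have := ltn_ord j0; move: ij0_lt; rewrite /ltpair /=; lia.
have [P sum_ge] := exists_perm_sum_ge B_ge0 w_sym (Rge_le _ _ energy_ge) A_lt.
exists P; rewrite (eq_bigr (fun ij => boltz beta (Some (w (P ij.1) (P ij.2))))); last first.
  by move=> ij /andP [/ltpair_offdiag ij_neq _]; rewrite Phi_w // (inj_eq perm_inj).
rewrite big_boltz_Some exp_pow_INR; apply: exp_nondecreasing.
move: sum_ge; set S := \big[Rplus/R0]_(ij | A ij) _ => sum_ge.
have := Rmult_le_compat_l beta _ _ (Rlt_le _ _ beta_gt0) sum_ge; lra.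
Qed.
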